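(* Let $\Sigma=\{a,b,c\}$ and let $\mathfrak{A}$ be the architecture with $\mathsf{Procs}=\{p_1,p_2\}$, $\mathsf{DS}=\mathsf{Queues}=\{c_1,c_2\}$ (no stacks, no bags), $\mathsf{Writer}(c_1)=\mathsf{Reader}(c_2)=p_1$ and $\mathsf{Writer}(c_2)=\mathsf{Reader}(c_1)=p_2$. There is a sentence $\varphi\in\mathsf{MSO}(\mathfrak{A},\Sigma)$ such that for every CPDS $\mathcal{S}$ over $\mathfrak{A}$ and $\Sigma$ we have $L(\mathcal{S})\neq L(\varphi)$.
   Context: An architecture is $\mathfrak{A}=(\mathsf{Procs},\mathsf{DS},\mathsf{Writer},\mathsf{Reader})$ with $\mathsf{DS}=\mathsf{Stacks}\uplus\mathsf{Queues}\uplus\mathsf{Bags}$ and $\mathsf{Writer},\mathsf{Reader}:\mathsf{DS}\to\mathsf{Procs}$. A CBM over $\mathfrak{A}$ and $\Sigma$ is $\mathcal{M}=((w_p)_{p\in\mathsf{Procs}},(\rhd^d)_{d\in\mathsf{DS}})$ with $w_p\in\Sigma^*$; events $\mathcal{E}=\bigcup_p\{(p,i)\mid1\le i\le|w_p|\}$, process successor $(p,i)\to(p,i+1)$, $\mathsf{pid}((p,i))=p$, $\lambda((p,i))$ the $i$-th letter of $w_p$; $\rhd^d\subseteq\mathcal{E}_{\mathsf{Writer}(d)}\times\mathcal{E}_{\mathsf{Reader}(d)}$ such that distinct edges (over all $d$) have four distinct endpoints, $<=(\to\cup\bigcup_d\rhd^d)^+$ is a strict partial order, and for each queue $d$, $e_1\rhd^d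 f_1$, $e_2\rhd^d f_2$, $e_1<e_2$ imply $f_1<f_2$ (and for stacks, $e_1<e_2<f_1$ implies $f_2<f_1$). A CPDS $\mathcal{S}=(\mathsf{Locs},\mathsf{Val},(\to_p)_p,\ell_{in},\mathsf{Fin})$ has nonempty finite $\mathsf{Locs},\mathsf{Val}$, $\ell_{in}\in\mathsf{Locs}$, $\mathsf{Fin}\subseteq\mathsf{Locs}^{\mathsf{Procs}}$ and finite transition sets $\to_p$ with transitions $\ell\xrightarrow{a}_p\ell'$, $\ell\xrightarrow{a,d!v}_p\ell'$ ($\mathsf{Writer}(d)=p$), $\ell\xrightarrow{a,d?v}_p\ell'$ ($\mathsf{Reader}(d)=p$). A run on a CBM is $\rho:\mathcal{E}\to\mathsf{Locs}$ such that, with $\rho^-(e)$ the value of $\rho$ at the $\to$-predecessor of $e$ or $\ell_{in}$ if none: events incident to no $\rhd$-edge use an internal transition $\rho^-(e)\xrightarrow{\lambda(e)}_{\mathsf{pid}(e)}\rho(e)$, and for each $e\rhd^d f$ some $v$ gives transitions $\rho^-(e)\xrightarrow{\lambda(e),d!v}\rho(e)$ and $\rho^-(f)\xrightarrow{\lambda(f),d?v}\rho(f)$. It is accepting if the tuple of last locations of each process ($\ell_{in}$ for processes with no events) is in $\mathsf{Fin}$. $L(\mathcal{S})$ = CBMs with an accepting run. $\mathsf{MSO}(\mathfrak{A},\Sigma)$: $\varphi::=a(x)\mid p(x)\mid x=y\mid x\rhd^d y\mid x\to y\mid x\in X\mid\varphi\vee\varphi\mid\neg\varphi\mid\exists x\varphi\mid\exists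 X\varphi$, interpreted over CBMs in the standard way ($a(x)$: $\lambda(x)=a$; $p(x)$: $\mathsf{pid}(x)=p$). $L(\varphi)$ is the set of CBMs satisfying sentence $\varphi$. *)

From HB Require Import structures.
From Stdlib Require Import Relations.
From mathcomp Require Import all_boot.
Set Implicit Arguments. Unset Strict Implicit. Unset Printing Implicit Defensive.

Inductive dskind := Stack | Queue | Bag.

Record arch := Arch {
  Procs : finType;
  DS : Type;
  kind : DS -> dskind;          (* DS = Stacks ⊎ Queues ⊎ Bags *)
  Writer : DS -> Procs;
  Reader : DS -> Procs }.

(* Events are pairs (p, i) with i < |w_p|; indices are 0-based here    *)
(* (event (p,i) here is event (p,i+1) of the paper).                   *)
Section CBM.
Variables (A : arch) (Sigma : Type).

Definition event := (Procs A * nat)%type.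

Record cbm := CBM {
  word : Procs A -> seq Sigma;
  edge : DS A -> event -> event -> Prop }.

Definition is_event (M : cbm) (e : event) : Prop := e.2 < size (word M e.1).

Definition pid (e : event) : Procs A := e.1.

Definition lab (M : cbm) (x0 : Sigma) (e : event) : Sigma :=
  nth x0 (word M e.1) e.2.

Definition succ (M : cbm) (e f : event) : Prop :=
  is_event M e /\ is_event M f /\ f.1 = e.1 /\ f.2 = e.2.+1.

Definition step (M : cbm) (e f : event) : Prop :=
  succ M e f \/ exists d, edge M d e f.

Definition lt_ev (M : cbm) : relation event := clos_trans event (step M).

Definition is_cbm (M : cbm) : Prop :=
  (forall d e f, edge M d e f ->
     is_event M e /\ is_event M f /\ e.1 = Writer d /\ f.1 = Reader d) /\
  (forall d e f d' e' f', edge M d e f -> edge M d' e' f' ->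
     (d, e, f) <> (d', e', f') ->
     [/\ e <> e', e <> f', f <> e' & f <> f']) /\
  (* < is a strict partial order (it is transitive by construction) *)
  (forall e, ~ lt_ev M e e) /\
  (forall d e1 f1 e2 f2, kind d = Queue -> edge M d e1 f1 -> edge M d e2 f2 ->
     lt_ev M e1 e2 -> lt_ev M f1 f2) /\
  (forall d e1 f1 e2 f2, kind d = Stack -> edge M d e1 f1 -> edge M d e2 f2 ->
     lt_ev M e1 e2 -> lt_ev M e2 f1 -> lt_ev M f2 f1).

End CBM.

(* Transition sets are finite since Locs, Val are finite types and the *)
(* transition relations are boolean predicates.  Write transitions     *)
(* d!v and read transitions d?v are indexed by d and belong to the     *)
(* processes Writer d and Reader d respectively.                       *)
Record cpds (A : arch) (Sigma : Type) := CPDS {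
  Locs : finType;
  Val : finType;
  val_inhab : Val;
  l_in : Locs;
  Fin : {set {ffun Procs A -> Locs}};
  tr_int : Procs A -> Locs -> Sigma -> Locs -> bool;
  tr_send : DS A -> Locs -> Sigma -> Val -> Locs -> bool;
  tr_recv : DS A -> Locs -> Sigma -> Val -> Locs -> bool
}.

Section Run.
Variables (A : arch) (Sigma : Type) (x0 : Sigma) (S : cpds A Sigma).

Definition rho_minus (rho : event A -> Locs S) (e : event A) : Locs S :=
  if e.2 is i.+1 then rho (e.1, i) else l_in S.

Definition is_run (M : cbm A Sigma) (rho : event A -> Locs S) : Prop :=
  (forall e, is_event M e ->
     (forall d f, ~ edge M d e f /\ ~ edge M d f e) ->
     @tr_int A Sigma S (pid e) (rho_minus rho e) (lab M x0 e) (rho e)) /\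
  (forall d e f, edge M d e f -> exists v : Val S,
     @tr_send A Sigma S d (rho_minus rho e) (lab M x0 e) v (rho e) /\
     @tr_recv A Sigma S d (rho_minus rho f) (lab M x0 f) v (rho f)).

(* last location of each process: rho at (p, |w_p| - 1), or l_in *)
Definition accepting (M : cbm A Sigma) (rho : event A -> Locs S) : Prop :=
  [ffun p => rho_minus rho (p, size (word M p))] \in @Fin A Sigma S.

Definition in_L_cpds (M : cbm A Sigma) : Prop :=
  is_cbm M /\ exists rho, is_run M rho /\ accepting M rho.

End Run.

Inductive mso (A : arch) (Sigma : Type) :=
| Lab of Sigma & nat
| Pid of Procs A & nat
| Eq of nat & nat
| Edge of DS A & nat & nat
| Succ of nat & nat
| Mem of nat & nat
| Or of mso A Sigma & mso A Sigma
| Not of mso A Sigma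
| Ex1 of nat & mso A Sigma
| Ex2 of nat & mso A Sigma.

Section MSOsem.
Variables (A : arch) (Sigma : Type) (x0 : Sigma).

Fixpoint free1 (phi : mso A Sigma) (x : nat) : bool :=
  match phi with
  | Lab _ y | Pid _ y => y == x
  | Eq y z | Edge _ y z | Succ y z => (y == x) || (z == x)
  | Mem y _ => y == x
  | Or p q => free1 p x || free1 q x
  | Not p => free1 p x
  | Ex1 y p => (y != x) && free1 p x
  | Ex2 _ p => free1 p x
  end.

Fixpoint free2 (phi : mso A Sigma) (X : nat) : bool :=
  match phi with
  | Mem _ Y => Y == X
  | Or p q => free2 p X || free2 q X
  | Not p | Ex1 _ p => free2 p X
  | Ex2 Y p => (Y != X) && free2 p X
  | _ => false
  end.

Definition sentence (phi : mso A Sigma) : Prop :=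
  forall x, ~~ free1 phi x /\ ~~ free2 phi x.

Fixpoint sat (M : cbm A Sigma) (nu1 : nat -> event A)
    (nu2 : nat -> event A -> Prop) (phi : mso A Sigma) : Prop :=
  match phi with
  | Lab a x => lab M x0 (nu1 x) = a
  | Pid p x => pid (nu1 x) = p
  | Eq x y => nu1 x = nu1 y
  | Edge d x y => edge M d (nu1 x) (nu1 y)
  | Succ x y => succ M (nu1 x) (nu1 y)
  | Mem x X => nu2 X (nu1 x)
  | Or p q => sat M nu1 nu2 p \/ sat M nu1 nu2 q
  | Not p => ~ sat M nu1 nu2 p
  | Ex1 x p => exists e, is_event M e /\
                 sat M (fun y => if y == x then e else nu1 y) nu2 p
  | Ex2 X p => exists E : event A -> Prop,
                 sat M nu1 (fun Y => if Y == X then E else nu2 Y) p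
  end.

(* For a sentence the (arbitrary) initial valuation is irrelevant. *)
Definition in_L_mso (phi : mso A Sigma) (M : cbm A Sigma) : Prop :=
  is_cbm M /\ forall nu1 nu2, sat M nu1 nu2 phi.

End MSOsem.

Inductive proc := p1 | p2.
Definition proc_to_bool (p : proc) : bool := if p is p1 then true else false.
Definition bool_to_proc (b : bool) : proc := if b then p1 else p2.
Lemma proc_K : cancel proc_to_bool bool_to_proc. Proof. by case. Qed.
HB.instance Definition _ := Equality.copy proc (can_type proc_K).
HB.instance Definition _ := Choice.copy proc (can_type proc_K).
HB.instance Definition _ := Countable.copy proc (can_type proc_K).
HB.instance Definition _ := Finite.copy proc (can_type proc_K).

Inductive chan := c1 | c2.
Inductive letter := la | lb | lc.

Definition chan_kind (d : chan) : dskind := Queue.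
Definition writer (d : chan) : proc := if d is c1 then p1 else p2.
Definition reader (d : chan) : proc := if d is c1 then p2 else p1.

Definition A2 : arch := @Arch proc chan chan_kind writer reader.

(* Cells of a word of length 2n(n+1) sit on process p1; sending a cell over c1
   and answering over c2 from the next event of p2 lands just before the cell
   n positions later, so MSO defines a hop of n cells and, with two more
   process steps, a long hop of n+1 cells.  Distinct cells reachable from each
   other by both kinds of hops are n(n+1) apart, so the sentence below holds on
   such a CBM exactly when the word is a square ww.

   Now cut each square CBM after the first half of p1 and n cells earlier on
   p2: the only messages crossing the cut are the n messages sent over c1 by
   the last n cells of the first half.  An accepting run of a CPDS is thus
   summarised at the cut by two locations and n message values.  For large n
   there are fewer summaries than the 2^(n(n+1)) words w, so two different
   words share one, and pasting the two runs yields an accepting run on a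
   non-square, which the sentence rejects. *)

From Pilot Require Import Defs.
From HB Require Import structures.
From mathcomp Require Import all_boot zify.
From Stdlib Require Import Relations Classical.
Set Implicit Arguments. Unset Strict Implicit. Unset Printing Implicit Defensive.

Arguments Lab {A Sigma}.
Arguments Eq {A Sigma}.
Arguments Edge {A Sigma}.
Arguments Succ {A Sigma}.
Arguments Defs.Mem {A Sigma}.

Notation mAnd phi psi := (Not (Or (Not phi) (Not psi))).
Notation mImp phi psi := (Or (Not phi) psi).
Notation mAll1 x phi := (Not (Ex1 x (Not phi))).
Notation mAll2 X phi := (Not (Ex2 X (Not phi))).

Section MSODerived.
Variables (A : arch) (Sigma : Type) (x0 : Sigma) (M : cbm A Sigma).
Implicit Types (phi psi : mso A Sigma).
Local Notation sat := (sat x0 M).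

Lemma sat_mAnd nu1 nu2 phi psi :
  sat nu1 nu2 (mAnd phi psi) <-> sat nu1 nu2 phi /\ sat nu1 nu2 psi.
Proof. by split=> /= [H | [H1 H2] []]; first split; apply: NNPP; tauto. Qed.

Lemma sat_mImp nu1 nu2 phi psi :
  sat nu1 nu2 (mImp phi psi) <-> (sat nu1 nu2 phi -> sat nu1 nu2 psi).
Proof. by split=> /= [|H]; [tauto | case: (classic (sat nu1 nu2 phi)); tauto]. Qed.

Lemma sat_Ex1 nu1 nu2 x phi :
  sat nu1 nu2 (Ex1 x phi) <->
  exists2 e, is_event M e & sat (fun y => if y == x then e else nu1 y) nu2 phi.
Proof. by split=> [[e []] | [e]]; exists e. Qed.

Lemma sat_mAll1 nu1 nu2 x phi :
  sat nu1 nu2 (mAll1 x phi) <->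
  (forall e, is_event M e -> sat (fun y => if y == x then e else nu1 y) nu2 phi).
Proof.
split=> /= H; last by case=> e [/H].
by move=> e ev; apply: NNPP => He; apply: H; exists e.
Qed.

Lemma sat_mAll2 nu1 nu2 X phi :
  sat nu1 nu2 (mAll2 X phi) <->
  (forall E, sat nu1 (fun Y => if Y == X then E else nu2 Y) phi).
Proof.
split=> /= H; last by case=> E; apply.
by move=> E; apply: NNPP => HE; apply: H; exists E.
Qed.

Definition on_events (R : relation (event A)) : relation (event A) :=
  fun e f => [/\ is_event M e, is_event M f & R e f].

(* Free variables: 0 (source) and 1 (target); [st] relates variables 7 and 8. *)
Definition mRtClos (st : mso A Sigma) : mso A Sigma :=
  mAll2 0 (mImp (mAnd (Defs.Mem 0 0)
                      (mAll1 7 (mAll1 8 (mImp (mAnd (Defs.Mem 7 0) st) (Defs.Mem 8 0)))))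
                (Defs.Mem 1 0)).

Lemma sat_mRtClos nu1 nu2 st R :
  (forall nu1' nu2', sat nu1' nu2' st <-> R (nu1' 7) (nu1' 8)) ->
  sat nu1 nu2 (mRtClos st) <-> clos_refl_trans _ (on_events R) (nu1 0) (nu1 1).
Proof.
move=> Hst; split.
  move/sat_mAll2 => /(_ (clos_refl_trans _ (on_events R) (nu1 0))) /sat_mImp; apply.
  apply/sat_mAnd; split; first exact: rt_refl.
  apply/sat_mAll1 => e ev; apply/sat_mAll1 => f fv.
  by apply/sat_mImp => /sat_mAnd [/= He /Hst /= Ref]; apply: rt_trans He (rt_step _ _ _ _ _).
move=> Hr; apply/sat_mAll2 => E; apply/sat_mImp => /sat_mAnd [E0 /sat_mAll1 Eclosed] /=.
elim: (clos_rt_rtn1 _ _ _ _ Hr) => [|e f [ev fv Ref] _ IH]; first exact: E0.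
move: (Eclosed e ev) => /sat_mAll1 /(_ f fv) /sat_mImp; apply.
by apply/sat_mAnd; split; last exact/Hst.
Qed.

End MSODerived.

Section CutAndPaste.
Variables (A : arch) (Sigma : Type) (x0 : Sigma) (S : cpds A Sigma).
Variables (M1 M2 M : cbm A Sigma) (cut : Procs A -> nat).

Definition in_past (e : event A) : bool := e.2 < cut e.1.

Hypothesis size_M1 : forall p, size (word M1 p) = size (word M p).
Hypothesis size_M2 : forall p, size (word M2 p) = size (word M p).
Hypothesis edge_M1 : edge M1 = edge M.
Hypothesis edge_M2 : edge M2 = edge M.
Hypothesis lab_M : forall e, lab M x0 e = if in_past e then lab M1 x0 e else lab M2 x0 e.
Hypothesis past_closed : forall d e f, edge M d e f -> in_past f -> in_past e.

Variables (rho1 rho2 : event A -> Locs S).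
Hypothesis run1 : is_run x0 M1 rho1.
Hypothesis run2 : is_run x0 M2 rho2.
Hypothesis agree_at_cut : forall p, rho1 (p, (cut p).-1) = rho2 (p, (cut p).-1).
Hypothesis crossing : forall d e f, edge M d e f -> in_past e -> ~~ in_past f ->
  exists v, @tr_send _ _ S d (rho_minus rho1 e) (lab M1 x0 e) v (rho1 e) /\
            @tr_recv _ _ S d (rho_minus rho2 f) (lab M2 x0 f) v (rho2 f).

Definition paste_runs (e : event A) : Locs S := if in_past e then rho1 e else rho2 e.

Lemma rho_minus_paste_past e : in_past e -> rho_minus paste_runs e = rho_minus rho1 e.
Proof.
case: e => p [|i] //; rewrite /in_past /paste_runs /rho_minus /= => ilt.
by rewrite ifT // /in_past /= ltnW.
Qed.

Lemma rho_minus_paste_future e : ~~ in_past e -> rho_minus paste_runs e = rho_minus rho2 e.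
Proof.
case: e => p [|i] //; rewrite /in_past /paste_runs /rho_minus /= -leqNgt => ige.
case: ifPn => //; rewrite /in_past /= => ilt.
by have -> : i = (cut p).-1 by lia.
Qed.

Lemma paste_run : is_run x0 M paste_runs.
Proof.
have is_event_M M' : (forall p, size (word M' p) = size (word M p)) ->
    forall e, is_event M e -> is_event M' e.
  by move=> sizeE e; rewrite /is_event sizeE.
split=> [e ev noedge | d e f ef].
  rewrite lab_M /paste_runs; case: ifPn => [past | future].
    rewrite rho_minus_paste_past //; apply: run1.1; [exact: is_event_M | by rewrite edge_M1].
  rewrite rho_minus_paste_future //; apply: run2.1; [exact: is_event_M | by rewrite edge_M2].
rewrite !lab_M /paste_runs.
case: (boolP (in_past e)) => [pe | fe]; case: (boolP (in_past f)) => [pf | ff].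
- rewrite !rho_minus_paste_past //; apply: run1.2; by rewrite edge_M1.
- by rewrite rho_minus_paste_past // rho_minus_paste_future //; apply: crossing.
- by rewrite (past_closed ef pf) in fe.
- rewrite !rho_minus_paste_future //; apply: run2.2; by rewrite edge_M2.
Qed.

Lemma paste_accepting : (forall p, cut p <= size (word M p)) ->
  accepting M2 rho2 -> accepting M paste_runs.
Proof.
move=> cut_le; rewrite /accepting.
suff -> : [ffun p => rho_minus paste_runs (p, size (word M p))] =
          [ffun p => rho_minus rho2 (p, size (word M2 p))] by [].
apply: eq_ffun => p; rewrite size_M2.
by apply: rho_minus_paste_future; rewrite /in_past /= -leqNgt.
Qed.

End CutAndPaste.

Section GeneralCBM.
Variables (A : arch) (Sigma : Type) (M : cbm A Sigma).

Lemma succ_proc p i : i.+1 < size (word M p) -> succ M (p, i) (p, i.+1).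
Proof. by move=> ilt; do !split => //; rewrite /is_event /= ltnW. Qed.

Lemma lt_ev_proc p i j : i < j -> j < size (word M p) -> lt_ev M (p, i) (p, j).
Proof.
elim: j => // j IH; rewrite ltnS leq_eqVlt => /orP [/eqP <- | ij] jlt.
  exact/t_step/or_introl/succ_proc.
by apply: t_trans (IH ij (ltnW jlt)) (t_step _ _ _ _ (or_introl (succ_proc jlt))).
Qed.

Lemma lt_ev_potential (pot : event A -> nat) :
  (forall e f, step M e f -> pot e < pot f) -> forall e f, lt_ev M e f -> pot e < pot f.
Proof. by move=> Hstep e f; elim=> [|e' g f' _ ? _]; [exact: Hstep | exact: ltn_trans]. Qed.

End GeneralCBM.

Lemma pigeonhole_rel (T U : finType) (R : T -> U -> Prop) :
  #|U| < #|T| -> (forall t, exists u, R t u) ->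
  exists t1 t2 u, [/\ t1 != t2, R t1 u & R t2 u].
Proof.
move=> card_lt /fin_all_exists [f Rf].
have /injectivePn [t1 [t2 t12 ft12]] : ~~ injectiveb f.
  by apply: contraTN card_lt => /injectiveP /leq_card; rewrite -leqNgt.
by exists t1, t2, (f t1); split; rewrite // ft12.
Qed.

Definition mHop (a b : nat) : mso A2 letter :=
  Ex1 2 (Ex1 3 (Ex1 4 (mAnd (Edge (A := A2) c1 a 2)
    (mAnd (Succ 2 3) (mAnd (Edge (A := A2) c2 3 4) (Succ 4 b)))))).

Definition mLongHop (a b : nat) : mso A2 letter :=
  Ex1 5 (Ex1 6 (mAnd (mHop a 5) (mAnd (Succ 5 6) (Succ 6 b)))).

Definition square_formula : mso A2 letter :=
  mAll1 0 (mAll1 1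
    (mImp (mAnd (Not (Eq 0 1)) (mAnd (mRtClos (mHop 7 8)) (mRtClos (mLongHop 7 8))))
          (mAnd (mImp (Lab la 0) (Lab la 1)) (mImp (Lab la 1) (Lab la 0))))).

Lemma square_formula_sentence : sentence square_formula.
Proof. by move=> x; do 10 (case: x => [|x] //). Qed.

Section HopSemantics.
Variable M : cbm A2 letter.
Local Notation sat := (sat la M).

Definition hop (e f : event A2) : Prop :=
  exists z1 z2 z3, [/\ edge M c1 e z1, succ M z1 z2, edge M c2 z2 z3 & succ M z3 f].

Definition long_hop (e f : event A2) : Prop :=
  exists w u, [/\ hop e w, succ M w u & succ M u f].

Lemma sat_mHop nu1 nu2 a b : 4 < a -> 4 < b ->
  sat nu1 nu2 (mHop a b) <-> hop (nu1 a) (nu1 b).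
Proof.
move=> a_gt4 b_gt4.
have [a2 a3 a4] : [/\ a == 2 = false, a == 3 = false & a == 4 = false] by split; apply/eqP; lia.
have [b2 b3 b4] : [/\ b == 2 = false, b == 3 = false & b == 4 = false] by split; apply/eqP; lia.
split.
  case=> z1 [_ [z2 [_ [z3 [_]]]]]; rewrite /= a2 a3 a4 b2 b3 b4 /= => H.
  by exists z1, z2, z3; split; apply: NNPP; tauto.
case=> z1 [z2 [z3 [e1 s12 e2 s3]]].
exists z1; split; first by case: s12.
exists z2; split; first by case: s12 => _ [].
exists z3; split; first by case: s3.
rewrite /= a2 a3 a4 b2 b3 b4 /=; tauto.
Qed.

Lemma sat_mLongHop nu1 nu2 : sat nu1 nu2 (mLongHop 7 8) <-> long_hop (nu1 7) (nu1 8).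
Proof.
split.
  move=> /sat_Ex1 [w _ /sat_Ex1 [u _]].
  move=> /sat_mAnd [/(@sat_mHop _ _ 7 5 isT isT) Hh /sat_mAnd [swu suf]].
  by exists w, u.
case=> w [u [Hh swu suf]].
apply/sat_Ex1; exists w; first by case: swu.
apply/sat_Ex1; exists u; first by case: suf.
by apply/sat_mAnd; split; [apply/(@sat_mHop _ _ 7 5 isT isT) | apply/sat_mAnd].
Qed.

Lemma sat_square_formula nu1 nu2 : sat nu1 nu2 square_formula <->
  (forall e f, is_event M e -> is_event M f -> e <> f ->
     clos_refl_trans _ (on_events M hop) e f ->
     clos_refl_trans _ (on_events M long_hop) e f ->
     (lab M la e = la <-> lab M la f = la)).
Proof.
have Rhop nu1' nu2' : sat nu1' nu2' (mHop 7 8) <-> hop (nu1' 7) (nu1' 8) by apply: sat_mHop.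
have Rlong nu1' nu2' := sat_mLongHop nu1' nu2'.
split.
  move/sat_mAll1 => H e f ev fv ef Hhop Hlong.
  move: (H e ev) => /sat_mAll1 /(_ f fv) /sat_mImp Himp.
  pose nu y := if y == 1 then f else if y == 0 then e else nu1 y.
  have Hpre :
      sat nu nu2 (mAnd (Not (Eq 0 1)) (mAnd (mRtClos (mHop 7 8)) (mRtClos (mLongHop 7 8)))).
    apply/sat_mAnd; split; first exact: ef.
    by apply/sat_mAnd; split; apply/sat_mRtClos.
  by have /sat_mAnd [/sat_mImp ef_la /sat_mImp fe_la] := Himp Hpre.
move=> H; apply/sat_mAll1 => e ev; apply/sat_mAll1 => f fv; apply/sat_mImp.
move/sat_mAnd => [ef /sat_mAnd [/(sat_mRtClos _ _ Rhop) Hhop /(sat_mRtClos _ _ Rlong) Hlong]].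
have [ef' fe'] := H e f ev fv ef Hhop Hlong.
by apply/sat_mAnd; split; apply/sat_mImp.
Qed.

End HopSemantics.

Definition blen (n : nat) : nat := n * n.+1.

Definition content n (x y : seq bool) (k : nat) : bool :=
  if k < blen n then nth false x k else nth false y (k - blen n).

(* The bits [content n x y k], [k < 2 * blen n], are carried by the odd events
   [cell k] of p1, labelled [b] exactly on the [false] bits.  Cell [k] sends over
   [c1] to [(p2, 2k)], whose successor answers over [c2] to [(p1, 2(k+n))], the
   event just before cell [k+n]. *)
Definition cell (k : nat) : event A2 := (p1, 2 * k + 1).

Lemma rt_cell_shift c (R : relation (event A2)) e f :
  (forall e f, R e f -> exists k, e = cell k /\ f = cell (k + c)) ->
  clos_refl_trans _ R e f ->
  e = f \/ exists k j, [/\ 0 < j, e = cell k & f = cell (k + j * c)].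
Proof.
move=> HR Hef; elim: (clos_rt_rt1n _ _ _ _ Hef) => [g | g h i /HR [k [-> ->]] _].
  by left.
case=> [<- | [k' [j [j0 Ek ->]]]]; right.
  by exists k, 1; rewrite mul1n.
exists k, j.+1; split=> //.
by move: Ek; rewrite /cell => -[Ek]; congr pair; rewrite mulSn; lia.
Qed.

Lemma rt_cell_shiftI c N (R : relation (event A2)) :
  (forall k, k + c < N -> R (cell k) (cell (k + c))) ->
  forall j k, k + j * c < N -> clos_refl_trans _ R (cell k) (cell (k + j * c)).
Proof.
move=> HR; elim=> [|j IH] k klt; first by rewrite mul0n addn0; apply: rt_refl.
rewrite mulSn in klt *; apply: rt_trans (IH k _) _; first lia.
rewrite (addnCA k) (addnC c); apply: rt_step; apply: HR; lia.
Qed.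

Lemma common_multiple_blen n j j' :
  0 < j -> j * n = j' * n.+1 -> j * n < 2 * blen n -> j * n = blen n.
Proof.
move=> j_gt0 E jlt.
have /dvdnP [q Ej] : n.+1 %| j by rewrite -(Gauss_dvdl _ (coprimeSn n)) E dvdn_mull.
have Ejn : j * n = q * blen n by rewrite Ej /blen -mulnA (mulnC n.+1).
rewrite Ejn; rewrite Ejn ltn_mul2r in jlt; case/andP: jlt => _ q_lt2.
have q_gt0 : 0 < q by move: j_gt0; rewrite Ej; case: q {Ej Ejn q_lt2}.
have -> : q = 1 by lia.
exact: mul1n.
Qed.

Definition pair_word n x y (p : proc) : seq letter :=
  if p is p1 then mkseq (fun i => if odd i && ~~ content n x y i./2 then lb else la) (4 * blen n)
  else nseq (4 * blen n) la.

Definition pair_edge n (d : chan) (e f : event A2) : Prop :=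
  if d is c1 then exists k, k < 2 * blen n /\ e = cell k /\ f = (p2, 2 * k)
  else exists k, k + n < 2 * blen n /\ e = (p2, 2 * k + 1) /\ f = (p1, 2 * (k + n)).

Definition pair_cbm n x y : cbm A2 letter := @CBM A2 letter (pair_word n x y) (pair_edge n).

Section PairCBM.
Variables (n : nat) (x y : seq bool).
Local Notation M := (pair_cbm n x y).

Lemma size_pair_word p : size (pair_word n x y p) = 4 * blen n.
Proof. by case: p; rewrite /= ?size_mkseq ?size_nseq. Qed.

Lemma is_event_pair e : is_event M e <-> e.2 < 4 * blen n.
Proof. by rewrite /is_event /= size_pair_word. Qed.

Lemma lab_cell k : k < 2 * blen n -> lab M la (cell k) = if content n x y k then la else lb.
Proof.
move=> klt; rewrite /lab /= nth_mkseq; last by lia.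
have -> : odd (2 * k + 1) by rewrite addn1 mul2n /= odd_double.
by rewrite addn1 mul2n /= uphalf_double; case: content.
Qed.

Lemma pair_cbm_is_cbm : 1 < n -> is_cbm M.
Proof.
move=> n_gt1.
pose time (e : event A2) := 2 * e.2 + (if e.1 is p2 then 3 else 0).
have time_step e f : step M e f -> time e < time f.
  case=> [[_ [_ [E1 E2]]] | [[] /= [k [_ [-> ->]]]]]; rewrite /time /cell /= ?E1 ?E2; try lia.
  by case: e.1 => /=; lia.
split; last split; last split; last split.
- case=> e f /= [k [klt [-> ->]]]; rewrite !is_event_pair /=; do !split => //; lia.
- case=> e f [] e' f' /= [k [_ [-> ->]]] [k' [_ [-> ->]]] neq;
    try (have kk' : k <> k' by move=> kk'; apply: neq; rewrite kk');
    rewrite /cell; split=> -[] /=; try done; lia.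
- by move=> e /(lt_ev_potential time_step); rewrite ltnn.
- case=> e1 f1 e2 f2 _ /= [k [klt [-> ->]]] [k' [k'lt [-> ->]]]
    /(lt_ev_potential time_step); rewrite /time /cell /= => tlt;
  apply: lt_ev_proc; rewrite ?size_pair_word; lia.
- by [].
Qed.

Lemma succ_pair e f : succ M e f <-> f = (e.1, e.2.+1) /\ e.2.+1 < 4 * blen n.
Proof.
rewrite /succ !is_event_pair; case: e f => [p i] [q j] /=.
split=> [[_ [jlt [-> Ej]]] | [[-> ->] ilt]]; last by do ?split; lia.
by rewrite Ej in jlt *.
Qed.

Lemma hop_pair e f :
  hop M e f <-> exists k, k + n < 2 * blen n /\ e = cell k /\ f = cell (k + n).
Proof.
split.
  case=> z1 [z2 [z3 [[k [_ [-> ->]]] /succ_pair [-> _] [k' [k'lt [/= [Ek] ->]]]]]].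
  move=> /succ_pair [-> _].
  by exists k; rewrite /cell /=; do ?split; [lia | congr pair; lia].
case=> k [klt [-> ->]]; exists (p2, 2 * k), (p2, 2 * k + 1), (p1, 2 * (k + n)).
split; first by exists k; split=> //; lia.
- by apply/succ_pair => /=; rewrite addn1; split=> //; lia.
- by exists k.
- by apply/succ_pair; rewrite /cell /= addn1; split=> //; lia.
Qed.

Lemma long_hop_pair e f :
  long_hop M e f <-> exists k, k + n.+1 < 2 * blen n /\ e = cell k /\ f = cell (k + n.+1).
Proof.
split.
  case=> w [u [/hop_pair [k [_ [-> ->]]] /succ_pair [-> _] /succ_pair [-> flt]]].
  by exists k; rewrite /cell /= in flt *; do ?split; [lia | congr pair; lia].
case=> k [klt [-> ->]]; exists (cell (k + n)), (p1, 2 * (k + n) + 2).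
split; first by apply/hop_pair; exists k; split=> //; lia.
- by apply/succ_pair; rewrite /cell /=; split; [congr pair; lia | lia].
- by apply/succ_pair; rewrite /cell /=; split; [congr pair; lia | lia].
Qed.

Lemma common_reach_pair e f : e <> f -> is_event M f ->
  clos_refl_trans _ (on_events M (hop M)) e f ->
  clos_refl_trans _ (on_events M (long_hop M)) e f ->
  exists2 k, k < blen n & e = cell k /\ f = cell (k + blen n).
Proof.
move=> ef fv Hh Hl.
have hop_shift e' f' : on_events M (hop M) e' f' -> exists k, e' = cell k /\ f' = cell (k + n).
  by move=> [_ _ /hop_pair [k [_ Eef]]]; exists k.
have long_hop_shift e' f' :
    on_events M (long_hop M) e' f' -> exists k, e' = cell k /\ f' = cell (k + n.+1).
  by move=> [_ _ /long_hop_pair [k [_ Eef]]]; exists k.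
have [/ef []|[k [j [j_gt0 Ee Ef]]]] := rt_cell_shift hop_shift Hh.
have [/ef []|[k' [j' [_ Ee' Ef']]]] := rt_cell_shift long_hop_shift Hl.
move: Ee' fv Ef'; rewrite Ee Ef is_event_pair /cell /= => -[Ek] fv [Ejj'].
have jn := @common_multiple_blen n j j' j_gt0 ltac:(lia) ltac:(lia).
by exists k; [lia | rewrite jn].
Qed.

Lemma common_reach_pairI k : k < blen n ->
  clos_refl_trans _ (on_events M (hop M)) (cell k) (cell (k + blen n)) /\
  clos_refl_trans _ (on_events M (long_hop M)) (cell k) (cell (k + blen n)).
Proof.
move=> klt.
have on_cells c R : (forall k', k' + c < 2 * blen n -> R (cell k') (cell (k' + c))) ->
    forall k', k' + c < 2 * blen n -> on_events M R (cell k') (cell (k' + c)).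
  move=> HR k' k'lt; split; last exact: HR.
    by apply/is_event_pair => /=; lia.
  by apply/is_event_pair => /=; lia.
split.
  rewrite [blen n]mulnC; apply: (rt_cell_shiftI (N := 2 * blen n)); last first.
    by rewrite mulnC -/(blen n); lia.
  by apply: on_cells => k' k'lt; apply/hop_pair; exists k'.
apply: (rt_cell_shiftI (N := 2 * blen n)); last by rewrite -/(blen n); lia.
by apply: on_cells => k' k'lt; apply/long_hop_pair; exists k'.
Qed.

Lemma sat_square_pair_cbm nu1 nu2 : size x = blen n -> size y = blen n ->
  sat la M nu1 nu2 square_formula <-> x = y.
Proof.
move=> sx sy; rewrite sat_square_formula.
have lab_pair k : k < blen n ->
    lab M la (cell k) = (if nth false x k then la else lb) /\
    lab M la (cell (k + blen n)) = (if nth false y k then la else lb).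
  move=> klt; rewrite !lab_cell /content; [|lia|lia].
  by rewrite klt ltnNge leq_addl addnK.
split=> [H | Exy e f _ fv ef Hh Hl].
  apply: (@eq_from_nth _ false); first by rewrite sx sy.
  move=> k; rewrite sx => klt; have [Hh Hl] := common_reach_pairI klt.
  have cell_neq : cell k <> cell (k + blen n) by rewrite /cell => -[]; lia.
  have ev_k : is_event M (cell k) by apply/is_event_pair => /=; lia.
  have ev_kb : is_event M (cell (k + blen n)) by apply/is_event_pair => /=; lia.
  have := H _ _ ev_k ev_kb cell_neq Hh Hl; have [-> ->] := lab_pair k klt.
  by case: (nth false x k) (nth false y k) => -[] // -[E1 E2];
    [move: (E1 erefl) | move: (E2 erefl)].
have [k klt [-> ->]] := common_reach_pair ef fv Hh Hl.
by have [-> ->] := lab_pair k klt; rewrite Exy.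
Qed.

End PairCBM.

Lemma count_interfaces_lt L V n : 2 * (L + V) < n -> L * L * V ^ n < 2 ^ blen n.
Proof.
move=> n_gt.
have le2 m : m <= 2 ^ m by exact/ltnW/ltn_expl.
apply: (@leq_ltn_trans (2 ^ L * 2 ^ L * (2 ^ V) ^ n)).
  by rewrite !leq_mul // leq_exp2r ?le2 //; lia.
rewrite -expnM -!expnD ltn_exp2l // /blen; nia.
Qed.

Definition pair_cut n (p : Procs A2) : nat := if p is p1 then 2 * blen n else 2 * (blen n - n).

Lemma leq_blen n : n <= blen n.
Proof. exact: leq_pmulr. Qed.

Section PairCut.
Variables (n : nat) (x y : seq bool).
Local Notation in_past := (in_past (pair_cut n)).

Lemma lab_pair_cut e : lab (pair_cbm n x y) la e =
  if in_past e then lab (pair_cbm n x x) la e else lab (pair_cbm n y y) la e.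
Proof.
case: e => [[] i]; rewrite /lab /in_past /=; last by case: ifP.
case: (ltnP i (4 * blen n)) => ilt; last by rewrite !nth_default ?size_mkseq //; case: ifP.
rewrite !nth_mkseq // /content; case: (odd i) => /=; last by case: ifP.
case: (ltnP i (2 * blen n)) => icut.
  by have -> : i./2 < blen n by rewrite ltn_half_double -mul2n.
by have -> : i./2 < blen n = false by rewrite ltn_half_double -mul2n ltnNge icut.
Qed.

Lemma pair_past_closed d e f : pair_edge n d e f -> in_past f -> in_past e.
Proof. by case: d => -[k [_ [-> ->]]]; rewrite /in_past /cell /=; lia. Qed.

Definition crossing_src (i : nat) : event A2 := cell (blen n - n + i).
Definition crossing_dst (i : nat) : event A2 := (p2, 2 * (blen n - n + i)).

Lemma pair_crossing_edge i : i < n -> pair_edge n c1 (crossing_src i) (crossing_dst i).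
Proof. by move=> ilt; exists (blen n - n + i); have := leq_blen n; split=> //; lia. Qed.

Lemma pair_crossing d e f : pair_edge n d e f -> in_past e -> ~~ in_past f ->
  exists i : 'I_n, [/\ d = c1, e = crossing_src i & f = crossing_dst i].
Proof.
case: d => -[k [klt [-> ->]]]; rewrite /in_past /cell /= -leqNgt => pe pf; last by lia.
have ilt : k - (blen n - n) < n by lia.
by exists (Ordinal ilt); rewrite /crossing_src /crossing_dst /cell /=; split=> //; congr pair; lia.
Qed.

End PairCut.

Section Interface.
Variables (n : nat) (S : cpds A2 letter).

Definition interface := ((Locs S * Locs S) * {ffun 'I_n -> Val S})%type.

Definition cut_states (rho : event A2 -> Locs S) : Locs S * Locs S :=
  (rho (p1, (pair_cut n p1).-1), rho (p2, (pair_cut n p2).-1)).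

Definition crossing_ok (M : cbm A2 letter) (rho : event A2 -> Locs S) (i : nat) (v : Val S) :=
  @tr_send _ _ S c1 (rho_minus rho (crossing_src n i)) (lab M la (crossing_src n i)) v
    (rho (crossing_src n i)) /\
  @tr_recv _ _ S c1 (rho_minus rho (crossing_dst n i)) (lab M la (crossing_dst n i)) v
    (rho (crossing_dst n i)).

Definition accepted_via (t : seq bool) (I : interface) : Prop :=
  exists rho, [/\ is_run la (pair_cbm n t t) rho, accepting (pair_cbm n t t) rho,
    cut_states rho = I.1 & forall i : 'I_n, crossing_ok (pair_cbm n t t) rho i (I.2 i)].

Lemma accepted_via_exists t : in_L_cpds la S (pair_cbm n t t) -> exists I, accepted_via t I.
Proof.
case=> _ [rho [run acc]].
have /fin_all_exists [v Hv] (i : 'I_n) : exists v, crossing_ok (pair_cbm n t t) rho i v.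
  exact: run.2 _ _ _ (pair_crossing_edge (ltn_ord i)).
by exists (cut_states rho, [ffun i => v i]), rho; split=> // i; rewrite ffunE.
Qed.

Lemma accepted_via_paste t1 t2 I : 1 < n -> accepted_via t1 I -> accepted_via t2 I ->
  in_L_cpds la S (pair_cbm n t1 t2).
Proof.
move=> n_gt1 [rho1 [run1 _ cut1 cross1]] [rho2 [run2 acc2 cut2 cross2]].
have size_eq t p : size (word (pair_cbm n t t) p) = size (word (pair_cbm n t1 t2) p).
  by rewrite !size_pair_word.
have cut12 : cut_states rho1 = cut_states rho2 by rewrite cut1 cut2.
have agree p : rho1 (p, (pair_cut n p).-1) = rho2 (p, (pair_cut n p).-1).
  by case: p; [exact: (congr1 fst cut12) | exact: (congr1 snd cut12)].
split; first exact: pair_cbm_is_cbm.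
exists (paste_runs (pair_cut n) rho1 rho2); split.
  apply: (paste_run (size_eq t1) (size_eq t2) erefl erefl (lab_pair_cut n t1 t2)
           (@pair_past_closed n) run1 run2 agree).
  move=> d e f def pe ff; have [i [-> -> ->]] := pair_crossing def pe ff.
  by exists (I.2 i); split; [exact: (cross1 i).1 | exact: (cross2 i).2].
apply: (paste_accepting (size_eq t2) agree _ acc2) => p.
by rewrite size_pair_word; case: p => /=; lia.
Qed.

End Interface.

Theorem mainTheorem2 :
  exists phi : mso A2 letter, sentence phi /\
    forall S : cpds A2 letter,
      ~ (forall M : cbm A2 letter,
           in_L_cpds la S M <-> in_L_mso la phi M).
Proof.
exists square_formula; split; first exact: square_formula_sentence.
move=> S HL; pose n := 2 * (#|Locs S| + #|Val S|) + 2.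
have n_gt1 : 1 < n by rewrite /n; lia.
have in_L_square (t : (blen n).-tuple bool) : in_L_cpds la S (pair_cbm n t t).
  apply/HL; split; first exact: pair_cbm_is_cbm.
  by move=> nu1 nu2; apply/sat_square_pair_cbm; rewrite ?size_tuple.
have few_interfaces : #|{: interface n S}| < #|{: (blen n).-tuple bool}|.
  by rewrite card_tuple card_bool !card_prod card_ffun card_ord count_interfaces_lt //; lia.
have [t1 [t2 [I [t12 I1 I2]]]] :=
  pigeonhole_rel few_interfaces (fun t => accepted_via_exists (in_L_square t)).
have [_ /(_ (fun=> (p1, 0)) (fun _ _ => True))] := (HL _).1 (accepted_via_paste n_gt1 I1 I2).
move/sat_square_pair_cbm; rewrite !size_tuple => /(_ erefl erefl) /val_inj t12'.
by rewrite t12' eqxx in t12.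
Qed.
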